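(* Let $G$ be a finite abelian group and $\sim$ a nontrivial equivalence relation on $G - \{0\}$ such that for $x \neq y$, $x \sim y$ implies $(y-x) \sim (-x)$. Suppose $z \in G-\{0\}$ satisfies $z \sim (-z)$, and let $[z]$ denote its equivalence class. Then $[z] \cup \{0\}$ is a proper subgroup of $G$.
   Context: An equivalence relation is nontrivial if it has at least two classes. *)

From HB Require Import structures.
From mathcomp Require Import all_boot all_order all_algebra.
Set Implicit Arguments. Unset Strict Implicit. Unset Printing Implicit Defensive.
Import GRing.Theory.
Local Open Scope ring_scope.

(* r is an equivalence relation on G - {0} (values of r at 0 are irrelevant). *)
Definition equiv_on_nonzero (G : zmodType) (r : G -> G -> Prop) : Prop :=
  [/\ (forall x : G, x != 0 -> r x x),
      (forall x y : G, x != 0 -> y != 0 -> r x y -> r y x) &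
      (forall x y w : G, x != 0 -> y != 0 -> w != 0 -> r x y -> r y w -> r x w)].

Definition nontrivial_on_nonzero (G : zmodType) (r : G -> G -> Prop) : Prop :=
  exists x y : G, [/\ x != 0, y != 0 & ~ r x y].

Definition eq_class (G : zmodType) (r : G -> G -> Prop) (z : G) : G -> Prop :=
  fun x => x != 0 /\ r z x.

Definition is_subgroup (G : zmodType) (S : G -> Prop) : Prop :=
  S 0 /\ (forall x y, S x -> S y -> S (x - y)).

Definition is_proper_subgroup (G : zmodType) (S : G -> Prop) : Prop :=
  is_subgroup S /\ exists g : G, ~ S g.

(** The class [z] is closed under negation: if x ~ z and x <> -z, applying
    the hypothesis to (-z, x) gives x + z ~ z, and applying it to (x, x + z)
    gives z ~ -x.  One more application, to (b, a), gives a - b ~ -b ~ z, so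
    [z] together with 0 is closed under differences.  It is proper because some
    class misses a nonzero element. *)
From mathcomp Require Import all_boot all_order all_algebra.
From Stdlib Require Import Classical.
Import GRing.Theory.
Local Open Scope ring_scope.

Section ClassSubgroup.

Variables (G : zmodType) (r : G -> G -> Prop).
Hypothesis r_equiv : equiv_on_nonzero r.
Hypothesis r_diff :
  forall x y : G, x != 0 -> y != 0 -> x != y -> r x y -> r (y - x) (- x).

Let r_refl x : x != 0 -> r x x.
Proof. by case: r_equiv => refl _ _; apply: refl. Qed.

Let r_sym x y : x != 0 -> y != 0 -> r x y -> r y x.
Proof. by case: r_equiv => _ sym _; apply: sym. Qed.

Let r_trans y x w : x != 0 -> y != 0 -> w != 0 -> r x y -> r y w -> r x w.
Proof. by case: r_equiv => _ _ trans; apply: trans. Qed.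

Lemma equiv_class_rel z x y :
  z != 0 -> x != 0 -> y != 0 -> r z x -> r z y -> r x y.
Proof. by move=> z0 x0 y0 zx zy; apply: (r_trans z) => //; apply: r_sym. Qed.

Variable z : G.
Hypotheses (z0 : z != 0) (z_oppz : r z (- z)).

Lemma eq_class_opp x : eq_class r z x -> eq_class r z (- x).
Proof.
move=> [x0 zx]; split; first by rewrite oppr_eq0.
have oppz0 : - z != 0 by rewrite oppr_eq0.
have [->|x_oppz] := eqVneq x (- z); first by rewrite opprK; apply: r_refl.
have xz0 : x + z != 0 by rewrite addr_eq0.
have xz_z : r (x + z) z.
  have oppz_x : r (- z) x := equiv_class_rel _ _ _ z0 oppz0 x0 z_oppz zx.
  have oppz_neq_x : - z != x by rewrite eq_sym.
  by have := r_diff _ _ oppz0 x0 oppz_neq_x oppz_x; rewrite opprK.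
have x_xz : r x (x + z) by apply: (r_trans z) => //; apply: r_sym.
have x_neq_xz : x != x + z by rewrite eq_sym -subr_eq0 addrC addKr.
by have := r_diff _ _ x0 xz0 x_neq_xz x_xz; rewrite addrC addKr.
Qed.

Lemma eq_class_sub x y :
  eq_class r z x -> eq_class r z y -> x != y -> eq_class r z (x - y).
Proof.
move=> [x0 zx] [y0 zy] xy; split; first by rewrite subr_eq0.
have [oppy0 z_oppy] := eq_class_opp y (conj y0 zy).
apply: (r_trans (- y)) => //; first by rewrite subr_eq0.
apply: r_sym => //; first by rewrite subr_eq0.
have yx : r y x := equiv_class_rel _ _ _ z0 y0 x0 zy zx.
by apply: r_diff => //; rewrite eq_sym.
Qed.

Lemma eq_class0_subgroup : is_subgroup (fun x : G => x = 0 \/ eq_class r z x).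
Proof.
split; first by left.
move=> x y [->|cx] [->|cy].
- by left; rewrite subr0.
- by right; rewrite sub0r; apply: eq_class_opp.
- by right; rewrite subr0.
- have [->|xy] := eqVneq x y; first by left; rewrite subrr.
  by right; apply: eq_class_sub.
Qed.

Lemma eq_class0_proper :
  nontrivial_on_nonzero r -> exists g : G, ~ (g = 0 \/ eq_class r z g).
Proof.
case=> x [y [x0 y0 not_xy]].
have [zx|not_zx] := classic (r z x).
  exists y => -[/eqP|[_ zy]]; first by apply/negP.
  by apply: not_xy; apply: equiv_class_rel zx zy.
by exists x => -[/eqP|[_ zx]]; first by apply/negP.
Qed.

End ClassSubgroup.

Theorem lemma3p14 (G : finZmodType) (r : G -> G -> Prop)
  (Hequiv : equiv_on_nonzero r)
  (Hnontriv : nontrivial_on_nonzero r)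
  (Hprop : forall x y : G, x != 0 -> y != 0 -> x != y -> r x y -> r (y - x) (- x))
  (z : G) (hz : z != 0) (hzz : r z (- z)) :
  is_proper_subgroup (fun x : G => x = 0 \/ eq_class r z x).
Proof.
split; first exact: eq_class0_subgroup.
exact: eq_class0_proper.
Qed.
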